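(* $H$ is continuous on $\Gamma$.
   Context: Let $G=(\mathbb{V},E)$ be a finite graph with adjacency $\sim$. Let $a_{ij}=a_{ji}\ge0$ ($>0$ only if $i\sim j$) and $p_{ij}=p_{ji}\in[0,1]$ ($=0$ if $i\not\sim j$), with some $a_{ij}p_{ij}>0$. Fix $h_1\in(0,1]$; $\Delta$ is the set of arrays $x=(x_{ij})$ with $x_{ij}=x_{ji}\ge0$, $x_{ij}=0$ if $i\not\sim j$, $\sum_{i,j}x_{ij}=1$, $\sum_{(i,j):a_{ij}p_{ij}>0}x_{ij}\ge h_1$; $x_i=\sum_jx_{ij}$. $H(x)=\sum_{(i,j):x_{ij}>0}a_{ij}p_{ij}x_{ij}^2/(x_ix_j)$; $F(x)_{ij}=x_{ij}\big(a_{ij}p_{ij}\frac{x_{ij}}{x_ix_j}-H(x)\big)$, with $F_{ij}=0$ if $x_{ij}=0$ and $a_{ij}p_{ij}x_{ij}/(x_ix_j):=0$ if $a_{ij}p_{ij}=0$. $\Gamma=\{x\in\Delta:F(x)=0\}$, with the topology induced from $\mathbb{R}^{\mathbb{V}\times\mathbb{V}}$. *)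

From mathcomp Require Import all_boot all_order all_algebra.
From mathcomp Require Import all_classical all_reals all_analysis.
Set Implicit Arguments. Unset Strict Implicit. Unset Printing Implicit Defensive.
Import Order.TTheory GRing.Theory Num.Theory.
Local Open Scope ring_scope.
Local Open Scope classical_set_scope.

Section Defs.
Variables (R : realType) (n : nat).
Implicit Types (adj : rel 'I_n) (a p x : 'M[R]_n).

Definition xv x (i : 'I_n) : R := \sum_(j < n) x i j.

Definition Hfun a p x : R :=
  \sum_(i < n) \sum_(j < n | 0 < x i j)
     a i j * p i j * x i j ^+ 2 / (xv x i * xv x j).

Definition Ffun a p x : 'M[R]_n :=
  \matrix_(i, j)
    if 0 < x i j then
      x i j * ((if 0 < a i j * p i j
                then a i j * p i j * x i j / (xv x i * xv x j) else 0)
               - Hfun a p x)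
    else 0.

Definition Delta adj a p (h1 : R) : set 'M[R]_n :=
  [set x | (forall i j, x i j = x j i)
        /\ (forall i j, 0 <= x i j)
        /\ (forall i j, ~~ adj i j -> x i j = 0)
        /\ \sum_(i < n) \sum_(j < n) x i j = 1
        /\ h1 <= \sum_(i < n) \sum_(j < n | 0 < a i j * p i j) x i j].

Definition Gamma adj a p (h1 : R) : set 'M[R]_n :=
  [set x | Delta adj a p h1 x /\ Ffun a p x = 0].

End Defs.

From mathcomp Require Import all_boot all_order all_algebra.
From mathcomp Require Import all_classical all_reals all_analysis.
Import Order.TTheory GRing.Theory Num.Theory numFieldTopology.Exports numFieldNormedType.Exports.
Local Open Scope ring_scope.
Local Open Scope classical_set_scope.

(* At a rest point x, pick an edge with x_ij > 0.  The equation
   F(x)_ij = 0 then says that H(x) equals the single edge ratio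
   a_ij p_ij x_ij / (x_i x_j), and this identity persists on all of Gamma
   near x, where x_ij stays positive.  The edge ratio is a rational function
   whose denominator x_i x_j >= x_ij^2 does not vanish at x, so H agrees on
   Gamma near x with a function continuous at x. *)

Lemma exists_pos_entry {R : realDomainType} {n : nat} (x : 'M[R]_n) :
  (forall i j, 0 <= x i j) -> \sum_(i < n) \sum_(j < n) x i j != 0 ->
  exists i j, 0 < x i j.
Proof.
move=> x_ge0; apply: contra_neqP => no_pos.
apply: big1 => i _; apply: big1 => j _; apply/eqP.
rewrite eq_le x_ge0 andbT leNgt; apply/negP => xij_gt0.
by apply: no_pos; exists i, j.
Qed.

Lemma entry_le_xv {R : realType} {n : nat} {x : 'M[R]_n} i j :
  (forall k, 0 <= x i k) -> x i j <= xv x i.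
Proof.
by move=> x_ge0; rewrite /xv (bigD1 j) //= lerDl sumr_ge0.
Qed.

Section edge_ratio.
Context {R : realType} {n : nat} (a p : 'M[R]_n).

Definition edge_ratio (i j : 'I_n) (x : 'M[R]_n) : R :=
  if 0 < a i j * p i j then a i j * p i j * x i j / (xv x i * xv x j) else 0.

Lemma Hfun_rest_point {x i j} :
  Ffun a p x = 0 -> 0 < x i j -> Hfun a p x = edge_ratio i j x.
Proof.
move=> /(congr1 (fun M : 'M[R]_n => M i j)); rewrite /Ffun !mxE => + xij_gt0.
by rewrite xij_gt0 => /eqP; rewrite mulf_eq0 gt_eqF //= subr_eq0 => /eqP.
Qed.

Lemma xv_continuous i : continuous (fun x : 'M[R]_n => xv x i).
Proof.
apply: continuous_big => [|j _]; first exact: add_continuous.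
exact: coord_continuous.
Qed.

Lemma edge_ratio_continuous_at x i j :
  xv x i * xv x j != 0 -> {for x, continuous (edge_ratio i j)}.
Proof.
move=> xv_neq0; rewrite /edge_ratio.
case: (0 < a i j * p i j); last exact: cst_continuous.
apply: continuousM.
  by apply: continuousM; [exact: cst_continuous | exact: coord_continuous].
by apply: continuousV => //; apply: continuousM; apply: xv_continuous.
Qed.

End edge_ratio.

Theorem lemma9 (R : realType) (n : nat) (adj : rel 'I_n) (a p : 'M[R]_n)
  (h1 : R) :
  symmetric adj ->
  (forall i j, a i j = a j i) -> (forall i j, 0 <= a i j) ->
  (forall i j, 0 < a i j -> adj i j) ->
  (forall i j, p i j = p j i) -> (forall i j, 0 <= p i j <= 1) ->
  (forall i j, ~~ adj i j -> p i j = 0) ->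
  (exists i j, 0 < a i j * p i j) ->
  0 < h1 <= 1 ->
  {within Gamma adj a p h1, continuous (Hfun a p)}.
Proof.
move=> _ _ _ _ _ _ _ _ _; apply/subspace_continuousP => x Gx.
have [[x_sym [x_ge0 [_ [x_sum _]]]] Fx0] := Gx.
have [i [j xij_gt0]] : exists i j, 0 < x i j.
  by apply: exists_pos_entry => //; rewrite x_sum oner_neq0.
have xvi_gt0 : 0 < xv x i := lt_le_trans xij_gt0 (entry_le_xv i j (x_ge0 i)).
have xvj_gt0 : 0 < xv x j.
  by rewrite (lt_le_trans _ (entry_le_xv j i (x_ge0 j))) // -x_sym.
have near_pos : \forall y \near x, 0 < (y : 'M[R]_n) i j.
  exact: cvgr_gt (x i j) (@coord_continuous _ _ _ i j x) 0 xij_gt0.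
have H_eq_ratio : within (Gamma adj a p h1) (nbhs x)
    (fun y => edge_ratio a p i j y = Hfun a p y).
  apply: filterS near_pos => y yij_gt0 [_ Fy0].
  by rewrite (Hfun_rest_point _ _ Fy0 yij_gt0).
apply: cvg_trans (near_eq_cvg H_eq_ratio) _.
rewrite /from_subspace (Hfun_rest_point _ _ Fx0 xij_gt0); apply: cvg_within_filter.
by apply: edge_ratio_continuous_at; rewrite mulf_neq0 // gt_eqF.
Qed.
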